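(* Let $d\ge2$, $1\le r_p\le n_p$, let $f$ be a real-valued function differentiable on an open neighbourhood of $\Omega=\mathrm{St}(r_1,n_1,\mathbb{C})\times\cdots\times\mathrm{St}(r_d,n_d,\mathbb{C})$, and let $\tilde f=f\circ\rho$, where $\rho$ keeps the first $r_p$ columns of the $p$-th component. Let $\upsilon\in\Upsilon=\mathcal{U}_{n_1}\times\cdots\times\mathcal{U}_{n_d}$ and $\omega=\rho(\upsilon)\in\Omega$. Then $\operatorname{grad}\tilde f(\upsilon)=0$ if and only if $\operatorname{grad}f(\omega)=0$.
   Context: $\mathrm{St}(r,n,\mathbb{C})=\{X\in\mathbb{C}^{n\times r}:X^HX=I_r\}$, $\mathcal{U}_n=\mathrm{St}(n,n,\mathbb{C})$. Matrix spaces carry the real inner product $\mathrm{Re}\,\mathrm{tr}(X^HY)$, Euclidean gradient $\nabla F=\partial F/\partial X^{\Re}+\mathrm{i}\,\partial F/\partial X^{\Im}$, $\mathrm{skew}(P)=\frac12(P-P^H)$. For $g$ on a Stiefel manifold, $\operatorname{grad}g(X)=(I_n-XX^H)\nabla g(X)+X\,\mathrm{skew}(X^H\nabla g(X))$. For $\omega=(X^{(1)},\dots,X^{(d)})$, $\operatorname{grad}f(\omega)=(\operatorname{grad}g_{(1)}(X^{(1)}),\dots,\operatorname{grad}g_{(d)}(X^{(d)}))$, where $g_{(p)}$ is $f$ as a function of the $p$-th component with the others fixed; $\operatorname{grad}\tilde f(\upsilon)$ is defined in the same way blockwise on $\Upsilon$. *)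

From HB Require Import structures.
From mathcomp Require Import all_boot all_order all_algebra.
From mathcomp Require Import all_classical all_reals.
From mathcomp Require Import topology normedtype derive.
From mathcomp Require Import complex.
Set Implicit Arguments. Unset Strict Implicit. Unset Printing Implicit Defensive.
Import Order.TTheory GRing.Theory Num.Theory numFieldNormedType.Exports.
Local Open Scope ring_scope.

Section Defs.
Variable R : realType.
Local Notation C := (R[i]).

Definition cconj (z : C) : C := @Complex R (@complex.Re R z) (- @complex.Im R z).
Definition ctr m n (A : 'M[C]_(m, n)) : 'M[C]_(n, m) := (map_mx cconj A)^T.
Definition skew n (P : 'M[C]_n) : 'M[C]_n := (2%:R : C)^-1 *: (P - ctr P).

Definition Stiefel (r n : nat) : set 'M[C]_(n, r) :=
  [set X | ctr X *m X = 1%:M].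

Definition amb (d : nat) (m k : 'I_d -> nat) := forall q : 'I_d, 'M[C]_(m q, k q).

Definition amb_add {d : nat} (m k : 'I_d -> nat) (x y : amb m k) : amb m k := fun q => x q + y q.
Definition amb_opp {d : nat} (m k : 'I_d -> nat) (x : amb m k) : amb m k := fun q => - x q.
Definition amb_scale {d : nat} (m k : 'I_d -> nat) (a : R) (x : amb m k) : amb m k := fun q => (a%:C)%C *: x q.

Definition amb_norm {d : nat} (m k : 'I_d -> nat) (x : amb m k) : R :=
  \sum_(q < d) \sum_(a < m q) \sum_(b < k q)
     (`|@complex.Re R (x q a b)| + `|@complex.Im R (x q a b)|).

Definition amb_open {d : nat} (m k : 'I_d -> nat) (U : set (amb m k)) :=
  forall x, U x -> exists2 e : R, 0 < e &
    forall y, amb_norm (amb_add y (amb_opp x)) < e -> U y.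

Definition amb_differentiable_at {d : nat} (m k : 'I_d -> nat) (F : amb m k -> R) (x : amb m k) :=
  exists L : amb m k -> R,
    (forall (a : R) (h1 h2 : amb m k),
        L (amb_add (amb_scale a h1) h2) = a * L h1 + L h2) /\
    (forall eps : R, 0 < eps -> exists2 del : R, 0 < del &
       forall h : amb m k, amb_norm h < del ->
         `|F (amb_add x h) - F x - L h| <= eps * amb_norm h).

Definition amb_dir {d : nat} (m k : 'I_d -> nat) (p : 'I_d) (i j : nat) (c : C) : amb m k :=
  fun q => \matrix_(a, b)
    (if [&& q == p, nat_of_ord a == i & nat_of_ord b == j] then c else 0).

(* Euclidean gradient of g_(p) : X^(p) |-> F(..., X^(p), ...) :
   dF/dX^Re + i dF/dX^Im, entrywise *)
Definition egrad {d : nat} (m k : 'I_d -> nat) (F : amb m k -> R) (x : amb m k) (p : 'I_d) :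
    'M[C]_(m p, k p) :=
  \matrix_(a, b)
    (((derive1 (fun t : R => F (amb_add x (amb_scale t (amb_dir m k p a b 1)))) 0)%:C)%C
     + (('i)%C * ((derive1 (fun t : R =>
           F (amb_add x (amb_scale t (amb_dir m k p a b ('i)%C))))) 0)%:C)%C).

(* Riemannian gradient on a Stiefel manifold:
   grad g(X) = (I - X X^H) G + X skew(X^H G), with G the Euclidean gradient *)
Definition stgrad n r (X G : 'M[C]_(n, r)) : 'M[C]_(n, r) :=
  (1%:M - X *m ctr X) *m G + X *m skew (ctr X *m G).

Definition pgrad {d : nat} (m k : 'I_d -> nat) (F : amb m k -> R) (x : amb m k) : amb m k :=
  fun p => stgrad (x p) (egrad F x p).

Definition rho {d : nat} (n r : 'I_d -> nat) (hr : forall q, (r q <= n q)%N)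
    (u : amb n n) : amb n r :=
  fun q => \matrix_(a, b) u q a (widen_ord (hr q) b).

End Defs.
Arguments Stiefel {R} r n.

(* Let E be the first r columns of the n x n identity, so that rho (u) = u E
   blockwise and E^H E = I.
   For u unitary, grad (f o rho) (u) = u skew (u^H G E^H), while
   grad f (u E) = u [(I - E E^H) M + E skew (E^H M)] with M = u^H G.
   Both vanish exactly when M E^H is Hermitian. *)
From Pilot Require Import Defs.
From HB Require Import structures.
From mathcomp Require Import all_boot all_order all_algebra.
From mathcomp Require Import all_classical all_reals.
From mathcomp Require Import topology normedtype derive.
From mathcomp Require Import complex.
Import Order.TTheory GRing.Theory Num.Theory.
Local Open Scope ring_scope.

Section PartialIdentity.
Variable K : pzSemiRingType.

Lemma mulmx_pid_mx_lt m n r (G : 'M[K]_(m, r)) a (b : 'I_n) (lt_br : (b < r)%N) :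
  (G *m pid_mx r) a b = G a (Ordinal lt_br).
Proof.
rewrite mxE (bigD1 (Ordinal lt_br)) //= mxE eqxx lt_br mulr1 big1 ?addr0 //.
move=> k /negPf neq_kb.
by rewrite mxE -(inj_eq val_inj) /= in neq_kb *; rewrite neq_kb mulr0.
Qed.

Lemma mulmx_pid_mx_ge m n r (G : 'M[K]_(m, r)) a (b : 'I_n) : (r <= b)%N ->
  (G *m pid_mx r) a b = 0.
Proof.
move=> le_rb; rewrite mxE big1 // => k _.
by rewrite mxE (ltn_eqF (leq_trans (ltn_ord k) le_rb)) mulr0.
Qed.

Lemma mulmx_pid_mx_widen m n r (le_rn : (r <= n)%N) (A : 'M[K]_(m, n)) :
  A *m pid_mx r = \matrix_(a, b) A a (widen_ord le_rn b).
Proof.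
apply/matrixP => a b; rewrite !mxE (bigD1 (widen_ord le_rn b)) //= mxE eqxx.
rewrite /= ltn_ord mulr1 big1 ?addr0 // => k /negPf neq_kb.
by rewrite mxE -(inj_eq val_inj) /= in neq_kb *; rewrite neq_kb mulr0.
Qed.

End PartialIdentity.

Section ConjugateTranspose.
Variable R : realType.
Local Notation C := (R[i]).

Lemma cconjE (z : C) : cconj z = z^*%C.
Proof. by case: z. Qed.

Lemma ctrE m n (A : 'M[C]_(m, n)) : ctr A = (map_mx conjc A)^T.
Proof. by apply/matrixP => i j; rewrite !mxE cconjE. Qed.

Lemma ctr_mul m n p (A : 'M[C]_(m, n)) (B : 'M[C]_(n, p)) :
  ctr (A *m B) = ctr B *m ctr A.
Proof. by rewrite !ctrE map_mxM trmx_mul. Qed.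

Lemma ctrK m n (A : 'M[C]_(m, n)) : ctr (ctr A) = A.
Proof. by apply/matrixP => i j; rewrite !ctrE !mxE conjcK. Qed.

Lemma ctr_pid_mx m n k : ctr (pid_mx k : 'M[C]_(m, n)) = pid_mx k.
Proof. by rewrite ctrE map_pid_mx tr_pid_mx. Qed.

Lemma ctr_pid_mx_orthonormal m n : (n <= m)%N ->
  ctr (pid_mx n : 'M[C]_(m, n)) *m pid_mx n = 1%:M.
Proof. by move=> le_nm; rewrite ctr_pid_mx pid_mx_id // pid_mx_1. Qed.

Lemma skew_eq0 n (P : 'M[C]_n) : Defs.skew P = 0 <-> ctr P = P.
Proof.
rewrite /Defs.skew; split=> [/eqP | ->]; last by rewrite subrr scaler0.
by rewrite scaler_eq0 invr_eq0 pnatr_eq0 /= subr_eq0 => /eqP <-.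
Qed.

Section Orthonormal.
Variables (n r : nat) (E : 'M[C]_(n, r)).
Hypothesis orthoE : ctr E *m E = 1%:M.

Lemma ctr_mul_stgrad M : ctr E *m stgrad E M = Defs.skew (ctr E *m M).
Proof.
rewrite /stgrad mulmxDr !mulmxA mulmxBr mulmx1 mulmxA orthoE.
by rewrite !mul1mx subrr mul0mx add0r.
Qed.

Lemma stgrad_eq0 M : stgrad E M = 0 <-> Defs.skew (M *m ctr E) = 0.
Proof.
have skew_ctrEM : Defs.skew (ctr E *m M) = 0 <-> ctr M *m E = ctr E *m M.
  by rewrite skew_eq0 ctr_mul ctrK.
rewrite skew_eq0 ctr_mul ctrK; split=> [gradM0 | hermME].
  have skewEM0 : Defs.skew (ctr E *m M) = 0.
    by rewrite -ctr_mul_stgrad gradM0 mulmx0.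
  have projM : E *m (ctr E *m M) = M.
    move/eqP: gradM0; rewrite /stgrad skewEM0 mulmx0 addr0 mulmxBl mul1mx.
    by rewrite subr_eq0 mulmxA => /eqP.
  move/skew_ctrEM: skewEM0 => hermEM.
  by rewrite -{1}projM -{2}projM !ctr_mul ctrK mulmxA hermEM !mulmxA.
have ctrM : ctr M = ctr E *m M *m ctr E.
  by rewrite -mulmxA -hermME mulmxA orthoE mul1mx.
have hermEM : ctr M *m E = ctr E *m M by rewrite ctrM -mulmxA orthoE mulmx1.
have projM : E *m (ctr E *m M) = M.
  by rewrite -hermEM mulmxA hermME -mulmxA orthoE mulmx1.
rewrite /stgrad (proj2 skew_ctrEM hermEM) mulmx0 addr0 mulmxBl mul1mx.
by rewrite -mulmxA projM subrr.
Qed.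

End Orthonormal.

Section Unitary.
Variables (n : nat) (U : 'M[C]_n).
Hypothesis unitU : ctr U *m U = 1%:M.

Lemma unitary_mulmx_eq0 r (X : 'M[C]_(n, r)) : U *m X = 0 <-> X = 0.
Proof.
split=> [UX0 | ->]; last by rewrite mulmx0.
by rewrite -[X]mul1mx -unitU -mulmxA UX0 mulmx0.
Qed.

Lemma stgrad_unitary (G : 'M[C]_n) :
  stgrad U G = U *m Defs.skew (ctr U *m G).
Proof. by rewrite /stgrad (mulmx1C unitU) subrr mul0mx add0r. Qed.

Lemma stgrad_mull r (E G : 'M[C]_(n, r)) :
  stgrad (U *m E) G = U *m stgrad E (ctr U *m G).
Proof.
rewrite /stgrad ctr_mul mulmxDr !mulmxA mulmxBr mulmx1 !mulmxBl (mulmx1C unitU).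
by rewrite !mulmxA.
Qed.

Lemma stgrad_mul_ctr_eq0 r (E G : 'M[C]_(n, r)) : ctr E *m E = 1%:M ->
  stgrad U (G *m ctr E) = 0 <-> stgrad (U *m E) G = 0.
Proof.
move=> orthoE; rewrite stgrad_unitary stgrad_mull !unitary_mulmx_eq0.
by rewrite stgrad_eq0 // mulmxA.
Qed.

End Unitary.

End ConjugateTranspose.

Lemma amb_add_scale_dir_out (R : realType) d (m k : 'I_d -> nat) (x : amb R m k)
    p i j c t : (k p <= j)%N ->
  amb_add x (amb_scale t (amb_dir m k p i j c)) = x.
Proof.
move=> le_kj; apply: functional_extensionality_dep => q.
have dir0 : amb_dir m k p i j c q = 0.
  apply/matrixP => a b; rewrite !mxE.
  case: eqP => //= eq_qp; subst q.
  by rewrite (ltn_eqF (leq_trans (ltn_ord b) le_kj)) andbF.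
by rewrite /amb_add /amb_scale dir0 scaler0 addr0.
Qed.

Section Truncation.
Variables (R : realType) (d : nat) (n r : 'I_d -> nat).
Hypothesis le_rn : forall q, (r q <= n q)%N.

Lemma rhoE (u : amb R n n) q : rho le_rn u q = u q *m pid_mx (r q).
Proof. by rewrite (@mulmx_pid_mx_widen _ _ _ _ (le_rn q)). Qed.

Lemma rho_add_scale_dir (u : amb R n n) p i j c t :
  rho le_rn (amb_add u (amb_scale t (amb_dir n n p i j c))) =
  amb_add (rho le_rn u) (amb_scale t (amb_dir n r p i j c)).
Proof.
by apply: functional_extensionality_dep => q; apply/matrixP => a b; rewrite !mxE.
Qed.

Lemma egrad_rho (f : amb R n r -> R) (u : amb R n n) p :
  egrad (fun v => f (rho le_rn v)) u p = egrad f (rho le_rn u) p *m pid_mx (r p).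
Proof.
apply/matrixP => a b.
have dirE c : (fun t => f (rho le_rn (amb_add u (amb_scale t (amb_dir n n p a b c))))) =
    (fun t => f (amb_add (rho le_rn u) (amb_scale t (amb_dir n r p a b c)))).
  by apply: funext => t; rewrite rho_add_scale_dir.
rewrite [LHS]mxE !dirE.
have [lt_br | le_rb] := ltnP b (r p); first by rewrite mulmx_pid_mx_lt mxE.
have constE c : (fun t => f (amb_add (rho le_rn u) (amb_scale t (amb_dir n r p a b c)))) =
    cst (f (rho le_rn u)).
  by apply: funext => t; rewrite amb_add_scale_dir_out.
by rewrite mulmx_pid_mx_ge // !constE derive1_cst mulr0 addr0.
Qed.

End Truncation.

Theorem corollary2p8 (R : realType) (d : nat) (n r : 'I_d -> nat)
  (hd : (2 <= d)%N)
  (hr1 : forall p, (1 <= r p)%N) (hr : forall p, (r p <= n p)%N)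
  (f : amb R n r -> R) (U : set (amb R n r))
  (hUopen : amb_open U)
  (hOmegaU : forall w : amb R n r, (forall p, Stiefel (r p) (n p) (w p)) -> U w)
  (hfdiff : forall w, U w -> amb_differentiable_at f w)
  (ups : amb R n n) (hups : forall p, Stiefel (n p) (n p) (ups p)) :
  let ftilde := fun u : amb R n n => f (rho hr u) in
  let omega := rho hr ups in
  (forall p, pgrad ftilde ups p = 0) <-> (forall p, pgrad f omega p = 0).
Proof.
move=> ftilde omega.
have blockwise p : pgrad ftilde ups p = 0 <-> pgrad f omega p = 0.
  rewrite /pgrad /ftilde egrad_rho /omega rhoE.
  rewrite -[X in stgrad _ (_ *m X)]ctr_pid_mx.
  by apply: stgrad_mul_ctr_eq0; [exact: hups | exact: ctr_pid_mx_orthonormal].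
by split=> grad0 p; apply/blockwise.
Qed.
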